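(* Let $k$ be an uncountable algebraically closed field and let $A$ be a just infinite $k$-algebra which is countably generated as a $k$-algebra and does not satisfy a polynomial identity. Then $A$ is stably just infinite.
   Context: All rings are associative unital algebras over a field. A $k$-algebra $A$ is called just infinite if $\dim_k(A)=\infty$ and every nonzero two-sided ideal of $A$ has finite codimension in $A$. A just infinite $k$-algebra $A$ is stably just infinite if $A\otimes_k K$ is just infinite over $K$ for every field extension $K/k$. *)

From HB Require Import structures.
From mathcomp Require Import all_boot all_order all_algebra.
Set Implicit Arguments. Unset Strict Implicit. Unset Printing Implicit Defensive.
Import GRing.Theory.
Local Open Scope ring_scope.

Definition uncountable (T : Type) : Prop :=
  forall f : nat -> T, ~ (forall t, exists n, f n = t).

Definition two_sided_ideal (R : pzRingType) (I : R -> Prop) : Prop :=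
  [/\ I 0, (forall x y, I x -> I y -> I (x + y)) &
      (forall a x, I x -> I (a * x) /\ I (x * a))].

Definition fin_codim (F : fieldType) (V : lmodType F) (I : V -> Prop) : Prop :=
  exists n (e : 'I_n -> V), forall v : V,
    exists c : 'I_n -> F, I (v - \sum_(i < n) c i *: e i).

Definition infinite_dim (F : fieldType) (V : lmodType F) : Prop :=
  ~ fin_codim (fun v : V => v = 0).

Definition just_infinite (F : fieldType) (A : algType F) : Prop :=
  infinite_dim A /\
  forall I : A -> Prop, two_sided_ideal I -> (exists x, I x /\ x <> 0) ->
    fin_codim I.

Definition subalgebra (F : fieldType) (A : algType F) (S : A -> Prop) : Prop :=
  [/\ S 1, (forall x y, S x -> S y -> S (x + y)),
      (forall x y, S x -> S y -> S (x * y)) &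
      (forall (c : F) x, S x -> S (c *: x))].

Definition countably_generated (F : fieldType) (A : algType F) : Prop :=
  exists g : nat -> A, forall S : A -> Prop, subalgebra S ->
    (forall n, S (g n)) -> forall a, S a.

(* A satisfies a polynomial identity: there is a nonzero element of the free
   algebra F<x_0,...,x_(n-1)> (a finitely supported coefficient function on
   words, words of length > d having coefficient 0) vanishing on all
   substitutions of elements of A. *)
Definition satisfies_PI (F : fieldType) (A : algType F) : Prop :=
  exists (n d : nat) (c : seq 'I_n -> F),
    [/\ (forall w : seq 'I_n, (d < size w)%N -> c w = 0),
        (exists w, c w != 0) &
        (forall x : 'I_n -> A,
           \sum_(m < d.+1) \sum_(w : m.-tuple 'I_n)
               c (tval w) *: \prod_(i <- tval w) x i = 0)].

(* B together with j : A -> B is (a model of) the base change A (x)_k K,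
   where K is a field extension of k via iota: j is a k-algebra map (k acting
   on B through iota), the image of j spans B over K, and j maps k-linearly
   independent families to K-linearly independent families.  Equivalently,
   the induced map A (x)_k K -> B, a (x) t |-> t *: j a, is a K-algebra
   isomorphism. *)
Definition is_base_change (k K : fieldType) (iota : {rmorphism k -> K})
    (A : algType k) (B : algType K) (j : A -> B) : Prop :=
  [/\ (forall x y, j (x + y) = j x + j y),
      (forall x y, j (x * y) = j x * j y),
      j 1 = 1 &
      (forall (c : k) x, j (c *: x) = iota c *: j x)] /\
  [/\
      (forall b : B, exists n (d : 'I_n -> K) (a : 'I_n -> A),
          b = \sum_(i < n) d i *: j (a i)) &
      (forall n (a : 'I_n -> A),
         (forall c : 'I_n -> k, \sum_(i < n) c i *: a i = 0 -> forall i, c i = 0) ->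
         forall d : 'I_n -> K, \sum_(i < n) d i *: j (a i) = 0 -> forall i, d i = 0)].

Definition stably_just_infinite (k : fieldType) (A : algType k) : Prop :=
  just_infinite A /\
  forall (K : fieldType) (iota : {rmorphism k -> K}) (B : algType K) (j : A -> B),
    is_base_change iota j -> just_infinite B.

From HB Require Import structures.
From mathcomp Require Import all_boot all_order all_algebra fingroup perm.
From Stdlib Require Import Classical ClassicalEpsilon.
Set Implicit Arguments. Unset Strict Implicit. Unset Printing Implicit Defensive.
Import GRing.Theory.
Local Open Scope ring_scope.

(* A just infinite algebra satisfying no polynomial identity is prime, and
   for each N some value of the standard polynomial s_(N+1) is a nonzero
   element lying in every ideal of codimension at most N.

   Schur's lemma follows: every A-bimodule map f from a nonzero ideal J to A
   is a scalar.  Otherwise, by primeness, f has no eigenvector, so every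
   (f - lam) J is a nonzero ideal; uncountably many lam share a bound N on
   its codimension, hence a common z <> 0 and elements w_lam of J with
   f w_lam = z + lam w_lam.  As k is algebraically closed these w_lam are
   linearly independent, which is impossible in an algebra of countable
   dimension.

   Now let I be a nonzero ideal of A (x) K and x = sum_i d_i (x) a_i an
   element of I of minimal length.  The maps a_0 |-> a_i extend to bimodule
   maps on the ideal generated by a_0, so they are scalars lam_i; hence that
   ideal, which has finite codimension, is mapped into I up to the nonzero
   factor sum_i lam_i d_i, and I has finite codimension. *)

Lemma big_ord_recr_lift (V : nmodType) n (G : 'I_n.+1 -> V) :
  \sum_(i < n.+1) G i = \sum_(i < n) G (lift ord_max i) + G ord_max.
Proof.
rewrite big_ord_recr /=; congr (_ + _); apply: eq_bigr => i _; congr G.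
by apply: val_inj; rewrite /= /bump leqNgt ltn_ord.
Qed.

Definition fam_rcons (T : Type) n (a : 'I_n -> T) (v : T) : 'I_n.+1 -> T :=
  fun i => if unlift ord_max i is Some i' then a i' else v.

Lemma fam_rcons_lift (T : Type) n (a : 'I_n -> T) v i :
  fam_rcons a v (lift ord_max i) = a i.
Proof. by rewrite /fam_rcons liftK. Qed.

Lemma fam_rcons_max (T : Type) n (a : 'I_n -> T) v : fam_rcons a v ord_max = v.
Proof. by rewrite /fam_rcons unlift_none. Qed.

Section LinearAlgebra.
Variables (F : fieldType) (V : lmodType F).

Definition subspace_pred (P : V -> Prop) : Prop :=
  [/\ P 0, (forall x y, P x -> P y -> P (x + y)) & (forall c x, P x -> P (c *: x))].

Lemma subspace_pred_eq0 : subspace_pred (fun v => v = 0).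
Proof. by split=> [|x y -> ->|c x ->]; rewrite ?addr0 ?scaler0. Qed.

Lemma subspace_pred_sum P (I : Type) (r : seq I) (G : I -> V) :
  subspace_pred P -> (forall i, P (G i)) -> P (\sum_(i <- r) G i).
Proof. by case=> P0 PD _ PG; apply: big_ind. Qed.

Definition codim_le (I : V -> Prop) N : Prop :=
  exists e : 'I_N -> V, forall v, exists c : 'I_N -> F, I (v - \sum_(i < N) c i *: e i).

Definition lin_indep n (e : 'I_n -> V) : Prop :=
  forall c : 'I_n -> F, \sum_(i < n) c i *: e i = 0 -> forall i, c i = 0.

(* A nonzero row of the kernel of the N-column coefficient matrix gives the
   combination: it kills the e-components. *)
Lemma nontrivial_comb_mod P m N (e : 'I_N -> V) (x : 'I_m -> V) :
  subspace_pred P -> (N < m)%N ->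
  (forall i, exists c : 'I_N -> F, P (x i - \sum_(l < N) c l *: e l)) ->
  exists2 g : 'I_m -> F, (exists i, g i != 0) & P (\sum_(i < m) g i *: x i).
Proof.
move=> [P0 PD PZ] ltNm /choice [c Hc].
pose C : 'M[F]_(m, N) := \matrix_(i, l) c i l.
have : kermx C != 0.
  rewrite -mxrank_eq0 mxrank_ker -lt0n subn_gt0.
  exact: leq_ltn_trans (rank_leq_col C) ltNm.
case/matrix0Pn => i0 [j0 nz]; pose g : 'I_m -> F := fun j => kermx C i0 j.
exists g; first by exists j0.
have gC0 l : \sum_i g i * c i l = 0.
  have /matrixP/(_ i0 l) := mulmx_ker C.
  rewrite !mxE => E; rewrite -[RHS]E; apply: eq_bigr => i _.
  by rewrite [C i l]mxE.
have -> : \sum_(i < m) g i *: x i =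
    \sum_(i < m) g i *: (x i - \sum_(l < N) c i l *: e l)
    + \sum_(l < N) (\sum_i g i * c i l) *: e l.
  under [X in _ = _ + X]eq_bigr do rewrite scaler_suml.
  rewrite exchange_big /= -big_split /=; apply: eq_bigr => i _.
  rewrite scalerDr scalerN scaler_sumr.
  by under [X in _ - X]eq_bigr do rewrite scalerA; rewrite addrNK.
under [X in _ + X]eq_bigr do rewrite gC0 scale0r.
by rewrite big1_eq addr0; apply: big_ind => // i _; apply: PZ.
Qed.

Lemma lin_indep_leq_span n N (x : 'I_n -> V) (e : 'I_N -> V) :
  lin_indep x -> (forall i, exists c : 'I_N -> F, x i = \sum_(l < N) c l *: e l) ->
  (n <= N)%N.
Proof.
move=> ix xe; rewrite leqNgt; apply/negP => ltNn.
have xe0 i : exists c : 'I_N -> F, x i - \sum_(l < N) c l *: e l = 0.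
  by have [c ->] := xe i; exists c; rewrite subrr.
have [g [i gi] /ix g0] := nontrivial_comb_mod subspace_pred_eq0 ltNn xe0.
by rewrite g0 eqxx in gi.
Qed.

Lemma lin_indep_rcons n (a : 'I_n -> V) v :
  lin_indep a -> (forall c : 'I_n -> F, v <> \sum_(i < n) c i *: a i) ->
  lin_indep (fam_rcons a v).
Proof.
move=> ia nv c; rewrite big_ord_recr_lift.
under eq_bigr do rewrite fam_rcons_lift.
rewrite fam_rcons_max => H.
have cm : c ord_max = 0.
  apply/eqP; apply: contraT => nz; exfalso.
  apply: (nv (fun i => - (c ord_max)^-1 * c (lift ord_max i))).
  apply: (scalerI nz); rewrite scaler_sumr.
  have -> : c ord_max *: v = - \sum_(i < n) c (lift ord_max i) *: a i.
    by apply/eqP; rewrite -addr_eq0 addrC H.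
  rewrite -sumrN; apply: eq_bigr => i _.
  by rewrite scalerA mulrA mulrN mulfV // mulN1r scaleNr.
rewrite cm scale0r addr0 in H.
by move=> i; case: (unliftP ord_max i) => [j ->|->] //; apply: ia H j.
Qed.

Lemma infinite_dim_lin_indep :
  infinite_dim V -> forall m, exists a : 'I_m -> V, lin_indep a.
Proof.
move=> inf; elim=> [|m [a ia]]; first by exists (fun _ => 0) => c _ [].
have [v nv] : exists v, forall c : 'I_m -> F, v <> \sum_(i < m) c i *: a i.
  apply: NNPP => H; apply: inf; exists m, a => v.
  apply: NNPP => H2; apply: H; exists v => c E; apply: H2; exists c.
  by rewrite E subrr.
by exists (fam_rcons a v); apply: lin_indep_rcons.
Qed.

Lemma exists_lin_indep_spanning n (b : 'I_n -> V) :
  exists r (e : 'I_r -> V), lin_indep e /\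
    exists beta : 'I_n -> 'I_r -> F, forall i, b i = \sum_(l < r) beta i l *: e l.
Proof.
elim: n b => [|n IH] b.
  by exists 0%N, (fun _ => 0); split; [move=> c _ [] | exists (fun _ _ => 0) => -[]].
have [r [e [ie [beta Hb]]]] := IH (fun i => b (lift ord_max i)).
case: (classic (exists c : 'I_r -> F, b ord_max = \sum_(l < r) c l *: e l)).
  move=> [c Hc]; exists r, e; split=> //.
  exists (fun i => if unlift ord_max i is Some i' then beta i' else c).
  by move=> i; case: (unliftP ord_max i) => [j ->|->].
move=> nc; exists r.+1, (fam_rcons e (b ord_max)); split.
  by apply: lin_indep_rcons => // c E; apply: nc; exists c.
exists (fun i l => if unlift ord_max i is Some i' then
          (if unlift ord_max l is Some l' then beta i' l' else 0)
        else (if unlift ord_max l is Some _ then 0 else 1)).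
move=> i; rewrite big_ord_recr_lift fam_rcons_max unlift_none.
under eq_bigr do rewrite fam_rcons_lift liftK.
case: (unliftP ord_max i) => [j ->|->]; rewrite ?liftK ?unlift_none.
  by rewrite scale0r addr0 -Hb.
by rewrite big1 ?add0r ?scale1r // => l _; rewrite scale0r.
Qed.

End LinearAlgebra.

Definition countable_pred (T : Type) (P : T -> Prop) : Prop :=
  exists e : nat -> T, forall t, P t -> exists n, e n = t.

Lemma uncountable_predT (T : Type) : uncountable T -> ~ countable_pred (fun _ : T => True).
Proof. by move=> unc [e He]; apply: (unc e) => t; apply: He. Qed.

Lemma uncountable_fiber (T : Type) (t0 : T) (P : T -> Prop) (g : T -> nat) :
  ~ countable_pred P -> exists n, ~ countable_pred (fun t => P t /\ g t = n).
Proof.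
move=> nP; apply: NNPP => H.
have /choice [E EP] : forall n, countable_pred (fun t => P t /\ g t = n).
  by move=> n; apply: NNPP => Hn; apply: H; exists n.
apply: nP; exists (fun m => if unpickle m is Some (a, b) then E a b else t0).
move=> t Pt; have [b Eb] := EP (g t) t (conj Pt erefl).
by exists (pickle (g t, b)); rewrite pickleK.
Qed.

Lemma uncountable_uniq_seq (T : eqType) (t0 : T) (P : T -> Prop) :
  ~ countable_pred P ->
  forall m, exists s : seq T, [/\ uniq s, size s = m & forall t, t \in s -> P t].
Proof.
move=> nP; elim=> [|m [s [us ss Ps]]]; first by exists [::].
have [t [Pt ts]] : exists t, P t /\ t \notin s.
  apply: NNPP => H; apply: nP; exists (nth t0 s) => t Pt.
  case: (boolP (t \in s)) => ts; first by exists (index t s); rewrite nth_index.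
  by exfalso; apply: H; exists t.
exists (t :: s); split => /=; [by rewrite ts us | by rewrite ss |].
by move=> u; rewrite inE => /predU1P [->|/Ps].
Qed.

Lemma uncountable_injection (T : eqType) (t0 : T) (P : T -> Prop) :
  ~ countable_pred P -> forall m, exists l : 'I_m -> T, injective l /\ forall i, P (l i).
Proof.
move=> nP m; have [s [us ss Ps]] := uncountable_uniq_seq t0 nP m.
exists (fun i => nth t0 s i); split.
  by move=> i j /eqP; rewrite nth_uniq ?ss // => /eqP /val_inj.
by move=> i; apply: Ps; rewrite mem_nth ?ss.
Qed.

Section Ideals.
Variables (F : fieldType) (A : algType F).

Lemma ideal_subspace (I : A -> Prop) : two_sided_ideal I -> subspace_pred I.
Proof.
case=> I0 ID IM; split=> // c x Ix.
by rewrite -[x]mul1r scalerAl; case: (IM (c *: 1) x Ix).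
Qed.

Lemma idealZ (I : A -> Prop) c x : two_sided_ideal I -> I x -> I (c *: x).
Proof. by move=> /ideal_subspace [_ _ IZ]; apply: IZ. Qed.

Lemma ideal_sum (I : A -> Prop) (T : Type) (r : seq T) (G : T -> A) :
  two_sided_ideal I -> (forall t, I (G t)) -> I (\sum_(t <- r) G t).
Proof. by move=> /ideal_subspace; apply: subspace_pred_sum. Qed.

Lemma idealMlr (I : A -> Prop) a x b : two_sided_ideal I -> I x -> I (a * x * b).
Proof. by case=> _ _ IM Ix; case: (IM b _ (IM a x Ix).1). Qed.

Definition sandwich (s : seq (A * A)) (t : A) : A := \sum_(q <- s) q.1 * t * q.2.

Lemma sandwich_cat s s' t : sandwich (s ++ s') t = sandwich s t + sandwich s' t.
Proof. by rewrite /sandwich big_cat. Qed.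

Lemma sandwich_oppl s t : sandwich [seq (- q.1, q.2) | q <- s] t = - sandwich s t.
Proof. by rewrite /sandwich big_map -sumrN; apply: eq_bigr => q _; rewrite !mulNr. Qed.

Lemma sandwich_scalel (c : F) s t :
  sandwich [seq (c *: q.1, q.2) | q <- s] t = c *: sandwich s t.
Proof.
by rewrite /sandwich big_map scaler_sumr; apply: eq_bigr => q _; rewrite !scalerAl.
Qed.

Lemma sandwich_mulx a b s t :
  sandwich [seq (a * q.1, q.2 * b) | q <- s] t = a * sandwich s t * b.
Proof.
rewrite /sandwich big_map mulr_sumr mulr_suml; apply: eq_bigr => q _.
by rewrite !mulrA.
Qed.

Lemma sandwich_id t : sandwich [:: (1, 1)] t = t.
Proof. by rewrite /sandwich big_seq1 mul1r mulr1. Qed.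

Definition pideal (a y : A) : Prop := exists s, y = sandwich s a.

Lemma pideal_ideal a : two_sided_ideal (pideal a).
Proof.
split.
- by exists [::]; rewrite /sandwich big_nil.
- by move=> x y [s ->] [t ->]; exists (s ++ t); rewrite sandwich_cat.
- move=> b x [s ->]; split.
    by exists [seq (b * q.1, q.2 * 1) | q <- s]; rewrite sandwich_mulx mulr1.
  by exists [seq (1 * q.1, q.2 * b) | q <- s]; rewrite sandwich_mulx mul1r.
Qed.

Lemma pideal_self a : pideal a a.
Proof. by exists [:: (1, 1)]; rewrite sandwich_id. Qed.

End Ideals.

Section StandardPolynomial.
Variables (F : fieldType) (A : algType F).

Definition upd m (x : 'I_m -> A) (p : 'I_m) (y : A) : 'I_m -> A :=
  fun i => if i == p then y else x i.

Lemma upd_id m (x : 'I_m -> A) p : upd x p (x p) =1 x.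
Proof. by move=> i; rewrite /upd; case: eqP => // ->. Qed.

Lemma prod_upd_sandwich m (x : 'I_m -> A) p :
  exists L R, forall y, \prod_(i < m) upd x p y i = L * y * R.
Proof.
rewrite /upd; elim: m x p => [|m IH] x p; first by case: p.
case: (unliftP ord0 p) => [q ->|->].
  have [L [R HLR]] := IH (fun i => x (lift ord0 i)) q.
  exists (x ord0 * L), R => y.
  rewrite big_ord_recl (_ : ord0 == lift ord0 q = false); last exact/negbTE/neq_lift.
  rewrite -!mulrA; congr (_ * _); rewrite mulrA -HLR; apply: eq_bigr => i _.
  by rewrite (inj_eq (@lift_inj _ ord0)).
exists 1, (\prod_(i < m) x (lift ord0 i)) => y; rewrite big_ord_recl eqxx mul1r.
by congr (_ * _); apply: eq_bigr.
Qed.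

Definition std_poly m (x : 'I_m -> A) : A :=
  \sum_(s : 'S_m) ((-1 : F) ^+ odd_perm s) *: \prod_(i < m) x (s i).

Lemma eq_std_poly m (x y : 'I_m -> A) : x =1 y -> std_poly x = std_poly y.
Proof.
by move=> E; apply: eq_bigr => s _; congr (_ *: _); apply: eq_bigr => i _; rewrite E.
Qed.

Lemma std_poly_term_sandwich m (x : 'I_m -> A) p (s : 'S_m) :
  exists L R, forall y, \prod_(i < m) upd x p y (s i) = L * y * R.
Proof.
have [L [R HLR]] := prod_upd_sandwich (fun i => x (s i)) ((s^-1)%g p).
exists L, R => y; rewrite -HLR; apply: eq_bigr => i _.
by rewrite /upd -{1}(permKV s p) (inj_eq perm_inj).
Qed.

Lemma std_poly_upd_linear m (x : 'I_m -> A) p a u v :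
  std_poly (upd x p (a *: u + v)) = a *: std_poly (upd x p u) + std_poly (upd x p v).
Proof.
rewrite /std_poly scaler_sumr -big_split /=; apply: eq_bigr => s _.
have [L [R HLR]] := std_poly_term_sandwich x p s.
rewrite !HLR mulrDr mulrDl -scalerAr -scalerAl scalerDr !scalerA.
by congr (_ *: _ + _); exact: mulrC.
Qed.

Lemma std_poly_upd0 m (x : 'I_m -> A) p : std_poly (upd x p 0) = 0.
Proof.
have := std_poly_upd_linear x p 1 0 0; rewrite !scale1r addr0 => H.
by apply: (@addrI _ (std_poly (upd x p 0))); rewrite addr0 -H.
Qed.

Lemma std_poly_upd_sum m (x : 'I_m -> A) p n (c : 'I_n -> F) (y : 'I_n -> A) :
  std_poly (upd x p (\sum_(i < n) c i *: y i)) =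
  \sum_(i < n) c i *: std_poly (upd x p (y i)).
Proof.
have Hadd : {morph (fun y => std_poly (upd x p y)) : u v / u + v >-> u + v}.
  by move=> u v /=; rewrite -{1}(scale1r u) std_poly_upd_linear scale1r.
rewrite (big_morph _ Hadd (std_poly_upd0 x p)); apply: eq_bigr => i _.
by rewrite -[c i *: y i]addr0 std_poly_upd_linear std_poly_upd0 addr0.
Qed.

Lemma std_poly_upd_ideal (I : A -> Prop) m (x : 'I_m -> A) p y :
  two_sided_ideal I -> I y -> I (std_poly (upd x p y)).
Proof.
move=> HI Iy; apply: ideal_sum => // s; apply: idealZ => //.
by have [L [R ->]] := std_poly_term_sandwich x p s; apply: idealMlr.
Qed.

(* Pairing each permutation s with s * (i j) cancels all terms. *)
Lemma std_poly_alt m (x : 'I_m -> A) i j : i != j -> x i = x j -> std_poly x = 0.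
Proof.
move=> neq eqx; pose t := tperm i j.
have oddMt (s : 'S_m) : odd_perm (s * t)%g = ~~ odd_perm s.
  by rewrite odd_permM odd_tperm neq addbT.
rewrite /std_poly (bigID (fun s : 'S_m => odd_perm s)) /=.
rewrite (reindex_inj (@mulIg _ t)) /=.
under eq_bigl do rewrite oddMt.
rewrite -[X in X + _]opprK -sumrN; apply/eqP; rewrite addrC subr_eq0; apply/eqP.
apply: eq_bigr => s _; rewrite oddMt signrN scaleNr opprK; congr (_ *: _).
apply: eq_bigr => l _; rewrite permM /t.
by case: tpermP => [->|->|] //; rewrite eqx.
Qed.

End StandardPolynomial.

Section PolynomialIdentities.
Variables (F : fieldType) (A : algType F).

Lemma satisfies_PI_of_words n (T : finType) (W : T -> seq 'I_n) (eps : T -> F) L :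
  (forall t, size (W t) = L) -> injective W -> (exists t, eps t != 0) ->
  (forall x : 'I_n -> A, \sum_t eps t *: \prod_(i <- W t) x i = 0) -> satisfies_PI A.
Proof.
move=> sW iW [t0 nz0] HW.
exists n, L, (fun w => \sum_t (if W t == w then eps t else 0)); split.
- move=> w lt; apply: big1 => t _; case: eqP => // E.
  by move: lt; rewrite -E sW ltnn.
- exists (W t0); rewrite (bigD1 t0) //= eqxx big1 ?addr0 // => t ne.
  by rewrite (inj_eq iW) (negbTE ne).
- move=> x; rewrite -[RHS](HW x).
  under eq_bigr do under eq_bigr do rewrite scaler_suml.
  under eq_bigr do rewrite exchange_big /=.
  rewrite exchange_big /=; apply: eq_bigr => t _.
  rewrite (bigD1 ord_max) //= [X in _ + X]big1 ?addr0; last first.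
    move=> mm ne; apply: big1 => w _; case: eqP => [E|_]; last by rewrite scale0r.
    have H : size (W t) = mm by rewrite E size_tuple.
    exfalso; move/negP: ne; apply; apply/eqP/val_inj => /=; by rewrite -H sW.
  have sz : size (W t) == L by rewrite sW.
  pose w0 : (nat_of_ord (@ord_max L)).-tuple 'I_n := Tuple sz.
  rewrite (bigD1 w0) //= eqxx [X in _ + X]big1 ?addr0 // => w ne.
  case: eqP => [E|_]; last by rewrite scale0r.
  move: ne; suff -> : w = w0 by rewrite eqxx.
  by apply: val_inj; rewrite /= E.
Qed.

Lemma size_index_enum_ord M : size (index_enum 'I_M) = M.
Proof.
by rewrite /index_enum unlock -enumT size_enum_ord.
Qed.

Lemma satisfies_PI_of_std_poly_mul M :
  (forall x : 'I_(M + M) -> A,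
      std_poly (fun i => x (lshift M i)) * std_poly (fun i => x (rshift M i)) = 0) ->
  satisfies_PI A.
Proof.
move=> HQ.
apply: (@satisfies_PI_of_words (M + M) ('S_M * 'S_M)%type
  (fun p => [seq lshift M (p.1 i) | i <- index_enum 'I_M] ++
            [seq rshift M (p.2 i) | i <- index_enum 'I_M])
  (fun p => (-1 : F) ^+ odd_perm p.1 * (-1) ^+ odd_perm p.2) (M + M)).
- by move=> p; rewrite size_cat !size_map size_index_enum_ord.
- move=> [s1 s2] [t1 t2] /= /eqP; rewrite eqseq_cat ?size_map //.
  case/andP => /eqP E1 /eqP E2.
  have Ep (s t : 'S_M) (f : 'I_M -> 'I_(M + M)) : injective f ->
      [seq f (s i) | i <- index_enum 'I_M] = [seq f (t i) | i <- index_enum 'I_M] -> s = t.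
    move=> fi /eq_in_map E; apply/permP => i.
    exact/fi/E/mem_index_enum.
  by rewrite (Ep _ _ _ (@lshift_inj M M) E1) (Ep _ _ _ (@rshift_inj M M) E2).
- by exists (1%g, 1%g); rewrite /= odd_perm1 mulr1 oner_eq0.
- move=> x; rewrite -[RHS](HQ x) /std_poly mulr_suml.
  under [RHS]eq_bigr do rewrite mulr_sumr.
  rewrite pair_big /=; apply: eq_bigr => -[s1 s2] _ /=.
  by rewrite big_cat /= !big_map -scalerAl -scalerAr scalerA.
Qed.

(* Modulo I the M arguments are linearly dependent; expanding the dependent
   argument multilinearly leaves only terms with a repeated argument. *)
Lemma std_poly_in_ideal (I : A -> Prop) N M (x : 'I_M -> A) :
  two_sided_ideal I -> codim_le I N -> (N < M)%N -> I (std_poly x).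
Proof.
move=> HI [e He] ltNM.
have [g [p nz] Iu] := nontrivial_comb_mod (ideal_subspace HI) ltNM (fun i => He (x i)).
set u := \sum_(i < M) g i *: x i in Iu.
pose g' i := if i == p then 0 else - g i.
have Ex : g p *: x p = u + \sum_(i < M) g' i *: x i.
  rewrite /u (bigD1 p) //= [X in _ = _ + X](bigD1 p) //= /g' eqxx scale0r add0r.
  rewrite -addrA -big_split /= big1 ?addr0 // => i ne.
  by rewrite (negbTE ne) scaleNr subrr.
clearbody u.
suff : I (g p *: std_poly x).
  by move/(idealZ (g p)^-1 HI); rewrite scalerA mulVf // scale1r.
rewrite -(eq_std_poly (upd_id x p)) -[g p *: _]addr0 -(std_poly_upd0 x p).
rewrite -std_poly_upd_linear addr0 Ex -[u]scale1r std_poly_upd_linear scale1r.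
rewrite std_poly_upd_sum [X in _ + X]big1 ?addr0; first exact: std_poly_upd_ideal.
move=> i _; rewrite /g'; case: eqP => [_|/eqP ne]; first by rewrite scale0r.
by rewrite (@std_poly_alt _ _ _ _ i p ne) ?scaler0 // /upd eqxx (negbTE ne).
Qed.

Definition prime_algebra : Prop :=
  forall a b : A, (forall r, a * r * b = 0) -> a = 0 \/ b = 0.

Hypothesis JI : just_infinite A.
Hypothesis nPI : ~ satisfies_PI A.

Lemma just_infinite_non_PI_prime : prime_algebra.
Proof.
move=> a b H; apply: NNPP => nab.
have na : a <> 0 by move=> E; apply: nab; left.
have nb : b <> 0 by move=> E; apply: nab; right.
have [n1 Ha] := JI.2 _ (pideal_ideal a) (ex_intro _ a (conj (pideal_self a) na)).
have [n2 Hb] := JI.2 _ (pideal_ideal b) (ex_intro _ b (conj (pideal_self b) nb)).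
apply: nPI; apply: (@satisfies_PI_of_std_poly_mul (n1 + n2).+1) => x.
have l1 : (n1 < (n1 + n2).+1)%N by rewrite ltnS leq_addr.
have l2 : (n2 < (n1 + n2).+1)%N by rewrite ltnS leq_addl.
have [s ->] := std_poly_in_ideal (fun i => x (lshift _ i)) (pideal_ideal a) Ha l1.
have [t ->] := std_poly_in_ideal (fun i => x (rshift _ i)) (pideal_ideal b) Hb l2.
rewrite /sandwich mulr_suml big1 // => q _; rewrite mulr_sumr big1 // => q' _.
have -> : q.1 * a * q.2 * (q'.1 * b * q'.2) = q.1 * (a * (q.2 * q'.1) * b) * q'.2.
  by rewrite !mulrA.
by rewrite H mulr0 mul0r.
Qed.

(* The witness is any nonzero value of the standard polynomial of degree N + 1. *)
Lemma non_PI_nonzero_in_codim_le_ideals N :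
  exists2 z : A, z <> 0 & forall I, two_sided_ideal I -> codim_le I N -> I z.
Proof.
apply: NNPP => H; apply: nPI; apply: (@satisfies_PI_of_std_poly_mul N.+1) => x.
suff -> : std_poly (fun i => x (lshift N.+1 i)) = 0 by rewrite mul0r.
apply: NNPP => nz; apply: H; exists (std_poly (fun i => x (lshift N.+1 i))) => //.
by move=> I HI HN; apply: std_poly_in_ideal HI HN _.
Qed.

End PolynomialIdentities.

Section CountableSpan.
Variables (k : fieldType) (A : algType k) (g : nat -> A).

(* Words in the generators, indexed by the [pickle] code of [seq nat]; non-codes give 0. *)
Definition monomial (n : nat) : A :=
  if unpickle n is Some w then \prod_(i <- w) g i else 0.

Definition in_monomial_span (a : A) : Prop :=
  exists M (c : nat -> k), a = \sum_(l < M) c l *: monomial l.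

Lemma monomial_span_widen M M' (c : nat -> k) : (M <= M')%N ->
  \sum_(l < M) c l *: monomial l =
  \sum_(l < M') (if (l < M)%N then c l else 0) *: monomial l.
Proof.
move=> le; rewrite (big_ord_widen M' (fun l => c l *: monomial l) le) big_mkcond /=.
by apply: eq_bigr => i _; case: ifP; rewrite ?scale0r.
Qed.

Lemma monomial_span0 : in_monomial_span 0.
Proof. by exists 0%N, (fun _ => 0); rewrite big_ord0. Qed.

Lemma monomial_spanD a b :
  in_monomial_span a -> in_monomial_span b -> in_monomial_span (a + b).
Proof.
move=> [M [c ->]] [M' [d ->]]; exists (maxn M M').
rewrite (monomial_span_widen c (leq_maxl M M')).
rewrite (monomial_span_widen d (leq_maxr M M')) -big_split /=.
exists (fun l => (if (l < M)%N then c l else 0) + (if (l < M')%N then d l else 0)).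
by apply: eq_bigr => i _; rewrite scalerDl.
Qed.

Lemma monomial_spanZ x a : in_monomial_span a -> in_monomial_span (x *: a).
Proof.
move=> [M [c ->]]; exists M, (fun n => x * c n); rewrite scaler_sumr.
by apply: eq_bigr => i _; rewrite scalerA.
Qed.

Lemma monomial_span_sum (T : Type) (r : seq T) (G : T -> A) :
  (forall t, in_monomial_span (G t)) -> in_monomial_span (\sum_(t <- r) G t).
Proof. by move=> H; apply: big_ind => //; [exact: monomial_span0 | exact: monomial_spanD]. Qed.

Lemma monomial_span_monomial n : in_monomial_span (monomial n).
Proof.
exists n.+1, (fun l => if l == n then 1 else 0).
rewrite big_ord_recr /= eqxx scale1r big1 ?add0r // => i _.
by rewrite (ltn_eqF (ltn_ord i)) scale0r.
Qed.

Lemma monomial_span_word (w : seq nat) : in_monomial_span (\prod_(i <- w) g i).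
Proof. by have := monomial_span_monomial (pickle w); rewrite /monomial pickleK. Qed.

Lemma monomial_spanM a b :
  in_monomial_span a -> in_monomial_span b -> in_monomial_span (a * b).
Proof.
move=> [M [c ->]] [M' [d ->]]; rewrite mulr_suml; apply: monomial_span_sum => l.
rewrite mulr_sumr; apply: monomial_span_sum => r.
rewrite -scalerAl -scalerAr; apply: monomial_spanZ; apply: monomial_spanZ.
rewrite /monomial; case: (unpickle l) => [w1|]; last by rewrite mul0r; apply: monomial_span0.
case: (unpickle r) => [w2|]; last by rewrite mulr0; apply: monomial_span0.
by rewrite -big_cat; apply: monomial_span_word.
Qed.

Lemma monomial_span_subalgebra : subalgebra in_monomial_span.
Proof.
split; [|exact: monomial_spanD | exact: monomial_spanM | exact: monomial_spanZ].
by have := monomial_span_word [::]; rewrite big_nil.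
Qed.

End CountableSpan.

Lemma countably_generated_countable_span (k : fieldType) (A : algType k) :
  countably_generated A ->
  exists b : nat -> A, forall a, exists M (c : nat -> k), a = \sum_(l < M) c l *: b l.
Proof.
move=> [g Hg]; exists (monomial g); apply: Hg (monomial_span_subalgebra g) _.
by move=> n; have := monomial_span_word g [:: n]; rewrite big_seq1.
Qed.

Section BimoduleMaps.
Variables (k : fieldType) (A : algType k).

Definition bimodule_map_on (J : A -> Prop) (f : A -> A) : Prop :=
  [/\ (forall u v, J u -> J v -> f (u + v) = f u + f v),
      (forall (c : k) u, J u -> f (c *: u) = c *: f u) &
      (forall a u b, J u -> f (a * u * b) = a * f u * b)].

Variables (J : A -> Prop) (f : A -> A).
Hypotheses (HJ : two_sided_ideal J) (Hf : bimodule_map_on J f).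

Lemma bimod_map0 : f 0 = 0.
Proof. by case: Hf HJ => _ fZ _ [J0 _ _]; rewrite -(scale0r 0) fZ ?scale0r. Qed.

Lemma bimod_mapMl a u : J u -> f (a * u) = a * f u.
Proof. by case: Hf => _ _ fM Ju; rewrite -[a * u]mulr1 fM // mulr1. Qed.

Lemma bimod_mapMr u b : J u -> f (u * b) = f u * b.
Proof. by case: Hf => _ _ fM Ju; rewrite -[u * b]mul1r mulrA fM // mul1r. Qed.

Lemma bimod_map_lincomb n (c : 'I_n -> k) (w : 'I_n -> A) : (forall i, J (w i)) ->
  f (\sum_(i < n) c i *: w i) = \sum_(i < n) c i *: f (w i).
Proof.
case: Hf => fD fZ _ Jw; elim: (index_enum _) => [|i r IH].
  by rewrite !big_nil bimod_map0.
rewrite !big_cons fD ?fZ ?IH //; first exact: idealZ.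
by apply: ideal_sum => // j; apply: idealZ.
Qed.

Lemma shifted_image_ideal (lam : k) :
  two_sided_ideal (fun y => exists2 u, J u & y = f u - lam *: u).
Proof.
case: (HJ) (Hf) => J0 JD JM [fD _ _]; split.
- by exists 0 => //; rewrite bimod_map0 scaler0 subrr.
- move=> x y [u Ju ->] [v Jv ->]; exists (u + v); first exact: JD.
  by rewrite fD // scalerDr opprD addrACA.
- move=> a x [u Ju ->]; split.
    exists (a * u); first exact: (JM a u Ju).1.
    by rewrite bimod_mapMl // mulrBr scalerAr.
  exists (u * a); first exact: (JM a u Ju).2.
  by rewrite bimod_mapMr // mulrBl scalerAl.
Qed.

(* For v in J, (f v - lam v) r u = v r (f u - lam u) = 0 for every r. *)
Lemma bimod_map_eigen_scalar lam u : prime_algebra A ->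
  J u -> u <> 0 -> f u = lam *: u -> forall v, J v -> f v = lam *: v.
Proof.
case: Hf => _ _ fM prA Ju nu Hu v Jv; apply/eqP; rewrite -subr_eq0; apply/eqP.
suff /prA [//|/nu//] : forall r, (f v - lam *: v) * r * u = 0.
move=> r; rewrite !mulrBl.
have -> : f v * r * u = v * r * f u.
  by rewrite -mulrA -bimod_mapMr // mulrA -[v * r * u]mulr1 fM // mulr1.
by rewrite Hu -scalerAr -!scalerAl subrr.
Qed.

End BimoduleMaps.

Lemma closed_field_eigenvector (k : closedFieldType) n (C : 'M[k]_n.+1) :
  exists mu (v : 'rV_n.+1), v *m C = mu *: v /\ v != 0.
Proof.
have : size (char_poly C) != 1 by rewrite size_char_poly.
case/closed_rootP => mu; rewrite -eigenvalue_root_char => /eigenvalueP [v Hv nz].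
by exists mu, v.
Qed.

Section SchurLemma.
Variables (k : closedFieldType) (A : algType k) (J : A -> Prop) (f : A -> A).
Hypotheses (HJ : two_sided_ideal J) (Hf : bimodule_map_on J f).

(* In the basis w, f acts on span(w) by the matrix with rows
   alpha + lam_i e_i; an eigenvector of that matrix gives one of f. *)
Lemma eigenvector_in_span m (lam alpha : 'I_m.+1 -> k) (w : 'I_m.+1 -> A) z :
  (forall i, J (w i)) -> (forall i, f (w i) = z + lam i *: w i) ->
  z = \sum_(i < m.+1) alpha i *: w i ->
  exists mu (v : 'I_m.+1 -> k), (exists i, v i != 0) /\
    f (\sum_(i < m.+1) v i *: w i) = mu *: \sum_(i < m.+1) v i *: w i.
Proof.
move=> Jw fw Ez.
pose C : 'M[k]_m.+1 := \matrix_(i, j) (alpha j + (i == j)%:R * lam i).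
have [mu [v [Hv vnz]]] := closed_field_eigenvector C.
have fwC i : f (w i) = \sum_(j < m.+1) C i j *: w j.
  under eq_bigr do rewrite mxE scalerDl.
  rewrite big_split /= -Ez fw; congr (_ + _).
  rewrite (bigD1 i) //= eqxx mul1r big1 ?addr0 // => j ne.
  by rewrite eq_sym (negbTE ne) mul0r scale0r.
exists mu, (fun j => v 0 j); split.
  by case/matrix0Pn: vnz => i0 [j0]; rewrite (ord1 i0); exists j0.
rewrite (bimod_map_lincomb HJ Hf) //.
under eq_bigr do rewrite fwC scaler_sumr.
rewrite exchange_big /= scaler_sumr; apply: eq_bigr => j _.
have /matrixP/(_ 0 j) := Hv; rewrite !mxE => Hj.
by rewrite scalerA -Hj scaler_suml; apply: eq_bigr => i _; rewrite scalerA.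
Qed.

Hypothesis no_eigen : forall lam u, J u -> f u = lam *: u -> u = 0.

Lemma shifted_preimages_span_notin (z : A) m (lam : 'I_m -> k) (w : 'I_m -> A) :
  z <> 0 -> (forall i, J (w i)) -> (forall i, f (w i) = z + lam i *: w i) ->
  lin_indep w -> forall alpha : 'I_m -> k, z <> \sum_(i < m) alpha i *: w i.
Proof.
case: m lam w => [|m] lam w nz Jw fw iw alpha Ez; first by rewrite big_ord0 in Ez.
have [mu [v [[j vj] fv]]] := eigenvector_in_span Jw fw Ez.
have Jv : J (\sum_(i < m.+1) v i *: w i).
  by apply: ideal_sum => // i; apply: idealZ.
by rewrite (iw _ (no_eigen Jv fv)) eqxx in vj.
Qed.

(* Applying f - lam_max to a relation yields (sum of coefficients) z plus
   a shorter relation, so by induction that sum vanishes. *)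
Lemma lin_indep_shifted_preimages (z : A) m (lam : 'I_m -> k) (w : 'I_m -> A) :
  z <> 0 -> injective lam -> (forall i, J (w i)) ->
  (forall i, f (w i) = z + lam i *: w i) -> lin_indep w.
Proof.
move=> nz; elim: m lam w => [|m IH] lam w ilam Jw fw gam H; first by case.
pose lm := lam ord_max; pose s := \sum_(i < m.+1) gam i.
pose w' i := w (lift ord_max i).
pose gam' i := gam (lift ord_max i) * (lam (lift ord_max i) - lm).
have E : s *: z + \sum_(i < m) gam' i *: w' i = 0.
  have E0 : f (\sum_(i < m.+1) gam i *: w i) - lm *: (\sum_(i < m.+1) gam i *: w i) = 0.
    by rewrite H (bimod_map0 HJ Hf) scaler0 subrr.
  rewrite -[RHS]E0 (bimod_map_lincomb HJ Hf) // scaler_sumr -sumrB.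
  rewrite [RHS](eq_bigr (fun i => gam i *: z + (gam i * (lam i - lm)) *: w i)).
    rewrite big_split /= -scaler_suml; congr (_ + _).
    by rewrite big_ord_recr_lift /lm subrr mulr0 scale0r addr0.
  by move=> i _; rewrite fw scalerDr !scalerA mulrBr scalerBl [lm * _]mulrC addrA.
have ilam' : injective (fun i => lam (lift ord_max i)) by move=> i j /ilam /lift_inj.
have IHw := IH _ w' ilam' (fun i => Jw _) (fun i => fw _).
have [s0|snz] := eqVneq s 0; last first.
  exfalso; apply: (@shifted_preimages_span_notin z m (fun i => lam (lift ord_max i)) w'
    nz (fun i => Jw _) (fun i => fw _) IHw (fun i => - (s^-1 * gam' i))).
  apply: (scalerI snz); rewrite scaler_sumr.
  have -> : s *: z = - \sum_(i < m) gam' i *: w' i by apply/eqP; rewrite -addr_eq0 E.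
  rewrite -sumrN; apply: eq_bigr => i _.
  by rewrite scalerA mulrN mulrA mulfV // mul1r scaleNr.
rewrite s0 scale0r add0r in E.
have gam'0 i : gam (lift ord_max i) = 0.
  have /eqP := IHw _ E i; rewrite mulf_eq0 subr_eq0 => /orP [/eqP //|].
  by move=> /eqP /ilam /eqP; rewrite eq_sym (negbTE (neq_lift _ _)).
move=> i; case: (unliftP ord_max i) => [j ->|->]; first exact: gam'0.
by move: s0; rewrite /s big_ord_recr_lift big1 ?add0r.
Qed.

End SchurLemma.

Section SchurLemmaJustInfinite.
Variables (k : closedFieldType) (A : algType k).
Hypotheses (unc : uncountable k) (JI : just_infinite A).
Hypotheses (cgA : countably_generated A) (nPI : ~ satisfies_PI A).
Variables (J : A -> Prop) (f : A -> A).
Hypotheses (HJ : two_sided_ideal J) (Hf : bimodule_map_on J f).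
Hypothesis Jnz : exists u, J u /\ u <> 0.

(* Each image of f - lam on J is a nonzero ideal, of finite codimension
   N_lam; uncountably many lam share one N, and the ideals of codimension
   at most N have a common nonzero element z. *)
Lemma shifted_preimages_uncountable :
  (forall lam u, J u -> f u = lam *: u -> u = 0) ->
  exists2 z : A, z <> 0 &
    ~ countable_pred (fun lam => exists2 w, J w & f w = z + lam *: w).
Proof.
move=> no_eigen.
pose I lam y := exists2 u, J u & y = f u - lam *: u.
have /choice [N codimN] : forall lam, exists N, codim_le (I lam) N.
  move=> lam; apply: JI.2; first exact: shifted_image_ideal.
  have [u [Ju nu]] := Jnz; exists (f u - lam *: u); split; first by exists u.
  by move/eqP; rewrite subr_eq0 => /eqP /(no_eigen _ _ Ju).
have [n Hn] := uncountable_fiber 0 N (uncountable_predT unc).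
have [z nz Hz] := non_PI_nonzero_in_codim_le_ideals nPI n.
exists z => // -[e He]; apply: Hn; exists e => lam [_ Nlam]; apply: He.
have [|u Ju Ez] := Hz (I lam) (shifted_image_ideal HJ Hf lam); first by rewrite -Nlam.
by exists u; rewrite // Ez subrK.
Qed.

(* Uncountably many preimages w_lam, pairwise shifted as above, would be
   linearly independent inside a space of countable dimension. *)
Lemma bimod_map_has_eigenvector :
  exists lam u, [/\ J u, u <> 0 & f u = lam *: u].
Proof.
apply: NNPP => NE.
have no_eigen lam u : J u -> f u = lam *: u -> u = 0.
  by move=> Ju fu; apply: NNPP => nu; apply: NE; exists lam, u.
have [z nz Hunc] := shifted_preimages_uncountable no_eigen.
pose P lam := exists2 w, J w & f w = z + lam *: w.
have /choice [W HW] : forall lam, exists w, P lam -> J w /\ f w = z + lam *: w.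
  move=> lam; case: (classic (P lam)) => [[w Jw fw]|nP]; last by exists 0.
  by exists w.
have [b spanb] := countably_generated_countable_span cgA.
have /choice [M HM] : forall lam, exists M (c : nat -> k), W lam = \sum_(l < M) c l *: b l.
  by move=> lam; apply: spanb.
have [m Hm] := uncountable_fiber 0 M Hunc.
have [ls [ils Pls]] := uncountable_injection 0 Hm m.+1.
have indep : lin_indep (fun i => W (ls i)).
  apply: (lin_indep_shifted_preimages HJ Hf no_eigen nz ils).
  - by move=> i; have [/HW [] ] := Pls i.
  - by move=> i; have [/HW [] ] := Pls i.
suff : (m.+1 <= m)%N by rewrite ltnn.
apply: (lin_indep_leq_span (e := fun l : 'I_m => b l) indep) => i.
have [_ <-] := Pls i; have [c ->] := HM (ls i).
by exists (fun l => c l).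
Qed.

Lemma bimod_map_scalar : exists lam, forall u, J u -> f u = lam *: u.
Proof.
have [lam [u [Ju nu fu]]] := bimod_map_has_eigenvector.
have prA := just_infinite_non_PI_prime JI nPI.
by exists lam => v; apply: (bimod_map_eigen_scalar Hf prA Ju nu fu).
Qed.

End SchurLemmaJustInfinite.

Lemma ex_minimal (P : nat -> Prop) :
  (exists n, P n) -> exists n, P n /\ forall m, (m < n)%N -> ~ P m.
Proof.
move=> [n Pn]; elim/ltn_ind: n Pn => n IH Pn.
case: (classic (exists2 m, (m < n)%N & P m)) => [[m lt Pm]|H]; first exact: IH lt Pm.
by exists n; split => // m lt Pm; apply: H; exists m.
Qed.

Section BaseChange.
Variables (k K : fieldType) (iota : {rmorphism k -> K}) (A : algType k) (B : algType K).
Variable j : A -> B.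
Hypothesis jD : forall x y, j (x + y) = j x + j y.
Hypothesis jM : forall x y, j (x * y) = j x * j y.
Hypothesis jZ : forall (c : k) x, j (c *: x) = iota c *: j x.
Hypothesis jspan : forall b : B, exists n (d : 'I_n -> K) (a : 'I_n -> A),
  b = \sum_(i < n) d i *: j (a i).
Hypothesis jind : forall n (a : 'I_n -> A), lin_indep a -> lin_indep (fun i => j (a i)).

Lemma bc_map0 : j 0 = 0.
Proof. by apply: (@addrI _ (j 0)); rewrite -jD !addr0. Qed.

Lemma bc_map_sum (T : Type) (r : seq T) (G : T -> A) :
  j (\sum_(t <- r) G t) = \sum_(t <- r) j (G t).
Proof. exact: (big_morph j jD bc_map0). Qed.

Lemma bc_mapB x y : j (x - y) = j x - j y.
Proof.
by rewrite jD; congr (_ + _); apply/eqP; rewrite -addr_eq0 -jD addNr bc_map0.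
Qed.

Lemma base_change_infinite_dim : infinite_dim A -> infinite_dim B.
Proof.
move=> infA [N [e He]]; have [a ia] := infinite_dim_lin_indep infA N.+1.
suff : (N.+1 <= N)%N by rewrite ltnn.
apply: (lin_indep_leq_span (e := e) (jind ia)) => i.
by have [c /eqP] := He (j (a i)); rewrite subr_eq0 => /eqP ->; exists c.
Qed.

(* Expand the b_i in a k-basis e of their span: the K-coefficients of the
   j (e l) are K-combinations of the d_i with coefficients in iota k. *)
Lemma base_change_coef_free n (d : 'I_n -> K) (b : 'I_n -> A) :
  (forall c : 'I_n -> k, \sum_(i < n) iota (c i) * d i = 0 -> forall i, c i = 0) ->
  \sum_(i < n) d i *: j (b i) = 0 -> forall i, b i = 0.
Proof.
move=> dfree H.
have [r [e [ie [beta Hb]]]] := exists_lin_indep_spanning b.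
have /(jind ie) H0 : \sum_(l < r) (\sum_(i < n) d i * iota (beta i l)) *: j (e l) = 0.
  rewrite -{}[RHS]H; under eq_bigr do rewrite scaler_suml.
  rewrite exchange_big /=; apply: eq_bigr => i _.
  rewrite Hb bc_map_sum scaler_sumr; apply: eq_bigr => l _.
  by rewrite jZ scalerA.
have beta0 l i : beta i l = 0.
  exact: dfree (fun i => beta i l) (etrans (eq_bigr _ (fun i _ => mulrC _ _)) (H0 l)) i.
by move=> i; rewrite Hb big1 // => l _; rewrite beta0 scale0r.
Qed.

Lemma base_change_codim_le (I : B -> Prop) (J : A -> Prop) p :
  two_sided_ideal I -> codim_le J p -> (forall u, J u -> I (j u)) ->
  codim_le I p.
Proof.
move=> HI [e He] JI; exists (fun l => j (e l)) => b.
have [m [d [a ->]]] := jspan b; have /choice [c Hc] := fun i => He (a i).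
exists (fun l => \sum_(i < m) d i * iota (c i l)).
have -> : \sum_(i < m) d i *: j (a i)
    - \sum_(l < p) (\sum_(i < m) d i * iota (c i l)) *: j (e l)
   = \sum_(i < m) d i *: j (a i - \sum_(l < p) c i l *: e l).
  under [X in _ - X]eq_bigr do rewrite scaler_suml.
  rewrite exchange_big /= -sumrB; apply: eq_bigr => i _.
  rewrite bc_mapB bc_map_sum scalerBr scaler_sumr; congr (_ - _).
  by apply: eq_bigr => l _; rewrite jZ scalerA.
by apply: ideal_sum => // i; apply: idealZ => //; apply: JI.
Qed.

Hypothesis schur : forall (J : A -> Prop) (f : A -> A),
  two_sided_ideal J -> (exists u, J u /\ u <> 0) -> bimodule_map_on J f ->
  exists lam, forall u, J u -> f u = lam *: u.

Section MinimalLength.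
Variables (I : B -> Prop) (n : nat) (d : 'I_n.+1 -> K) (a : 'I_n.+1 -> A).
Hypothesis HI : two_sided_ideal I.
Let x := \sum_(i < n.+1) d i *: j (a i).
Hypotheses (Ix : I x) (x_nz : x <> 0).
Hypothesis shorter0 : forall (d' : 'I_n -> K) (a' : 'I_n -> A),
  I (\sum_(i < n) d' i *: j (a' i)) -> \sum_(i < n) d' i *: j (a' i) = 0.

Lemma min_length_coef_free (c : 'I_n.+1 -> k) :
  \sum_(i < n.+1) iota (c i) * d i = 0 -> forall i, c i = 0.
Proof.
move=> Hc p; apply/eqP; apply: contraT => cp; exfalso; apply: x_nz.
pose a' i := a (lift p i) - (c (lift p i) / c p) *: a p.
suff Ex : \sum_(i < n) d (lift p i) *: j (a' i) = x.
  by rewrite -Ex; apply: shorter0; rewrite Ex.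
have Hs : \sum_(i < n) iota (c (lift p i)) * d (lift p i) = - (iota (c p) * d p).
  by apply/eqP; rewrite -addr_eq0 addrC; move: Hc; rewrite (bigD1_ord p) //= => ->.
under eq_bigr do rewrite bc_mapB jZ scalerBr scalerA.
rewrite sumrB -scaler_suml.
have -> : \sum_(i < n) d (lift p i) * iota (c (lift p i) / c p) = - d p.
  under eq_bigr do rewrite fmorph_div mulrA [d _ * _]mulrC.
  by rewrite -mulr_suml Hs mulNr [iota (c p) * _]mulrC mulfK // fmorph_eq0.
by rewrite scaleNr opprK /x (bigD1_ord p) //= addrC.
Qed.

Lemma min_length_head_nz : a ord0 <> 0.
Proof.
move=> a0; apply: x_nz.
have Ex : x = \sum_(i < n) d (lift ord0 i) *: j (a (lift ord0 i)).
  by rewrite /x (bigD1_ord ord0) //= a0 bc_map0 scaler0 add0r.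
by rewrite Ex; apply: shorter0; rewrite -Ex.
Qed.

Lemma min_length_sandwich s :
  \sum_(q <- s) j q.1 * x * j q.2 = \sum_(i < n.+1) d i *: j (sandwich s (a i)).
Proof.
rewrite /x; under eq_bigr do rewrite mulr_sumr mulr_suml.
rewrite exchange_big /=; apply: eq_bigr => i _.
rewrite /sandwich bc_map_sum scaler_sumr; apply: eq_bigr => q _.
by rewrite !jM -scalerAr -scalerAl.
Qed.

Lemma min_length_sandwich_ideal s : I (\sum_(q <- s) j q.1 * x * j q.2).
Proof. by apply: ideal_sum => // q; apply: idealMlr. Qed.

Lemma min_length_sandwich_kernel s :
  sandwich s (a ord0) = 0 -> forall i, sandwich s (a i) = 0.
Proof.
move=> s0; apply: (base_change_coef_free min_length_coef_free).
have E : \sum_(i < n.+1) d i *: j (sandwich s (a i)) =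
    \sum_(i < n) d (lift ord0 i) *: j (sandwich s (a (lift ord0 i))).
  by rewrite (bigD1_ord ord0) //= s0 bc_map0 scaler0 add0r.
by rewrite E; apply: shorter0; rewrite -E -min_length_sandwich; apply: min_length_sandwich_ideal.
Qed.

(* [coef_map i] sends [sandwich s (a ord0)] to [sandwich s (a i)] for a chosen
   [s]; by [min_length_sandwich_kernel] the result does not depend on the choice. *)
Definition coef_map i (y : A) : A :=
  sandwich (epsilon (inhabits [::]) (fun s => y = sandwich s (a ord0))) (a i).

Lemma coef_map_sandwich i s : coef_map i (sandwich s (a ord0)) = sandwich s (a i).
Proof.
rewrite /coef_map; set s' := epsilon _ _.
have Es' : sandwich s (a ord0) = sandwich s' (a ord0).
  exact: (epsilon_spec (inhabits [::]) (fun s0 => _ = sandwich s0 _) (ex_intro _ s erefl)).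
have := min_length_sandwich_kernel (s := s ++ [seq (- q.1, q.2) | q <- s']).
rewrite sandwich_cat sandwich_oppl -Es' subrr => /(_ erefl i) /eqP.
by rewrite sandwich_cat sandwich_oppl subr_eq0 => /eqP.
Qed.

Lemma coef_map_bimodule i : bimodule_map_on (pideal (a ord0)) (coef_map i).
Proof.
split.
- move=> u v [s ->] [t ->].
  by rewrite -sandwich_cat !coef_map_sandwich sandwich_cat.
- by move=> c u [s ->]; rewrite -sandwich_scalel !coef_map_sandwich sandwich_scalel.
- by move=> b1 u b2 [s ->]; rewrite -sandwich_mulx !coef_map_sandwich sandwich_mulx.
Qed.

(* With coef_map i = lam_i, the sandwiches of x are tau *: j (sandwiches of a_0). *)
Lemma min_length_pideal_image u : pideal (a ord0) u -> I (j u).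
Proof.
have /choice [lam Hlam] i : exists lam, forall u, pideal (a ord0) u -> coef_map i u = lam *: u.
  apply: schur (pideal_ideal _) _ (coef_map_bimodule i).
  by exists (a ord0); split; [exact: pideal_self | exact: min_length_head_nz].
pose tau := \sum_(i < n.+1) iota (lam i) * d i.
have tau_nz : tau != 0.
  apply/eqP => /min_length_coef_free /(_ ord0) lam0; apply: min_length_head_nz.
  have := coef_map_sandwich ord0 [:: (1, 1)].
  by rewrite sandwich_id Hlam ?lam0 ?scale0r //; apply: pideal_self.
move=> [s ->]; suff : I (tau *: j (sandwich s (a ord0))).
  by move/(idealZ tau^-1 HI); rewrite scalerA mulVf // scale1r.
suff <- : \sum_(q <- s) j q.1 * x * j q.2 = tau *: j (sandwich s (a ord0)).
  exact: min_length_sandwich_ideal.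
rewrite min_length_sandwich /tau scaler_suml; apply: eq_bigr => i _.
rewrite -(coef_map_sandwich i s) Hlam; last by exists s.
by rewrite jZ scalerA mulrC.
Qed.

End MinimalLength.

Hypothesis JIA : just_infinite A.

Lemma base_change_ideal_fin_codim (I : B -> Prop) :
  two_sided_ideal I -> (exists x, I x /\ x <> 0) -> fin_codim I.
Proof.
move=> HI [x0 [Ix0 nx0]].
pose length_le m := exists (d : 'I_m -> K) (a : 'I_m -> A),
  I (\sum_(i < m) d i *: j (a i)) /\ \sum_(i < m) d i *: j (a i) <> 0.
have [|m [[d [a [Ix nx]]] nmin]] := ex_minimal (P := length_le).
  by have [n [d [a E]]] := jspan x0; exists n, d, a; rewrite -E.
case: m d a Ix nx nmin => [|n] d a Ix nx nmin; first by rewrite big_ord0 in nx.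
have shorter0 (d' : 'I_n -> K) (a' : 'I_n -> A) :
    I (\sum_(i < n) d' i *: j (a' i)) -> \sum_(i < n) d' i *: j (a' i) = 0.
  by move=> I' ; apply: NNPP => n'; apply: (nmin n (ltnSn n)); exists d', a'.
have a0_nz := min_length_head_nz Ix nx shorter0.
have [p Hp] := JIA.2 _ (pideal_ideal (a ord0)) (ex_intro _ _ (conj (pideal_self _) a0_nz)).
exists p; apply: (base_change_codim_le HI Hp).
exact: min_length_pideal_image HI Ix nx shorter0.
Qed.

End BaseChange.

Theorem corollary6p4 (k : closedFieldType) (A : algType k) :
  uncountable k -> just_infinite A -> countably_generated A ->
  ~ satisfies_PI A -> stably_just_infinite A.
Proof.
move=> unc JI cgA nPI; split=> // K iota B j [[jD jM _ jZ] [jspan jind]].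
split; first exact: (base_change_infinite_dim jind JI.1).
apply: (base_change_ideal_fin_codim jD jM jZ jspan jind _ JI) => J f HJ Jnz Hf.
exact: (bimod_map_scalar unc JI cgA nPI HJ Hf Jnz).
Qed.
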